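(* Let $n\ge 2$ and let $\mathcal{C}(I,n)$ be the class of all vectors $\mathbf{X}=(X_1,\ldots,X_n)$ of independent $[0,1]$-valued random variables, with $U(\mathbf{X})=\max_i EX_i$ and $M(\mathbf{X})=E(\max_i X_i)$. Then for all $\mathbf{X}\in\mathcal{C}(I,n)$ with $U(\mathbf{X})>0$, $$M(\mathbf{X})/U(\mathbf{X})\le n,$$ and for all $\mathbf{X}\in\mathcal{C}(I,n)$, $$M(\mathbf{X})-U(\mathbf{X})\le n^{-1/(n-1)}-n^{-n/(n-1)}.$$ Moreover, equality in the latter inequality is attained by $\mathbf{Z}=(Z_1,\ldots,Z_n)$ with $Z_i$ iid Bernoulli random variables satisfying $P(Z_i=1)=1-n^{-1/(n-1)}$ (so that $U(\mathbf{Z})=1-n^{-1/(n-1)}$). *)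

From HB Require Import structures.
From mathcomp Require Import all_boot all_order all_algebra.
From mathcomp Require Import all_classical all_reals all_analysis.
Set Implicit Arguments. Unset Strict Implicit. Unset Printing Implicit Defensive.
Import Order.TTheory GRing.Theory Num.Theory.
Local Open Scope classical_set_scope.
Local Open Scope ring_scope.

Definition mutually_independent d (T : measurableType d) (R : realType)
  (P : probability T R) (n : nat) (X : 'I_n -> T -> R) : Prop :=
  forall (J : {set 'I_n}) (B : 'I_n -> set R),
    (forall i, measurable (B i)) ->
    P [set x | forall i, i \in J -> B i (X i x)] =
    (\prod_(i in J) P (X i @^-1` B i))%E.

(* U(X) = max_i E X_i  (real-valued; expectations are finite for bounded X) *)
Definition Umax d (T : measurableType d) (R : realType)
  (P : probability T R) (n : nat) (X : 'I_n -> T -> R) : R :=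
  \big[Num.max/0]_(i < n) fine ('E_P[X i]).

Definition Mmax d (T : measurableType d) (R : realType)
  (P : probability T R) (n : nat) (X : 'I_n -> T -> R) : R :=
  fine ('E_P[fun x => \big[Num.max/0]_(i < n) X i x]).

(* Pointwise, max_i X_i <= 1 - prod_i (1 - X_i).  For independent X_i the
   expectation of the product is prod_i (1 - E X_i) >= (1 - U)^n; lacking a
   product rule for expectations, we round each X_i up to a grid of mesh 1/K,
   where independence of the events {X_i in cell} applies directly, and let
   K grow.  This gives M - U <= (1 - U) - (1 - U)^n + 1/K, and since the tangent
   to s |-> s^n at q = n^(-1/(n-1)) has slope 1, s - s^n <= q - q^n for s >= 0.
   For iid Bernoulli variables max_i Z_i is 1 minus the indicator that all Z_i
   vanish, which makes the bound an equality.  The ratio bound is max <= sum. *)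

From HB Require Import structures.
From mathcomp Require Import all_boot all_order all_algebra.
From mathcomp Require Import all_classical all_reals all_analysis.
From mathcomp Require Import ring lra measurable_realfun.
Import Order.TTheory GRing.Theory Num.Theory.
Local Open Scope classical_set_scope.
Local Open Scope ring_scope.
Set Implicit Arguments. Unset Strict Implicit.

Section real_expectation.
Context d (T : measurableType d) (R : realType) (P : probability T R).

Definition rexpect (g : T -> R) : R := fine 'E_P[g].

Lemma Lfun1_bounded (g : T -> R) (C : R) :
  measurable_fun setT g -> (forall x, `|g x| <= C) -> g \in Lfun P 1.
Proof.
move=> mg gC; apply/Lfun1_integrable/measurable_bounded_integrable => //.
  exact: le_lt_trans (probability_le1 P measurableT) (ltry _).
exists C; split; first by rewrite (@ger0_real _ C)// (le_trans _ (gC point)).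
by move=> y Cy x _ /=; exact: le_trans (gC x) (ltW Cy).
Qed.

Lemma Lfun1_indic (A : set T) : measurable A -> (\1_A : T -> R) \in Lfun P 1.
Proof.
move=> mA; apply: (@Lfun1_bounded _ 1); first exact: measurable_indic.
by move=> x; rewrite indicE; case: (x \in A); rewrite ?normr1 ?normr0.
Qed.

Lemma Lfun1_add (g h : T -> R) : g \in Lfun P 1 -> h \in Lfun P 1 ->
  (fun x => g x + h x) \in Lfun P 1.
Proof. exact: rpredD. Qed.

Lemma Lfun1_scale (g : T -> R) (k : R) : g \in Lfun P 1 ->
  (fun x => k * g x) \in Lfun P 1.
Proof. by move=> gL; rewrite -[X in X \in _]/(k *: g); exact: rpredZ. Qed.

Lemma Lfun1_sum (I : finType) (g : I -> T -> R) :
  (forall i, g i \in Lfun P 1) -> (fun x => \sum_i g i x) \in Lfun P 1.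
Proof. by move=> gL; rewrite -fct_sumE; apply: rpred_sum => i _; exact: gL. Qed.

Lemma rexpectD (g h : T -> R) : g \in Lfun P 1 -> h \in Lfun P 1 ->
  rexpect (fun x => g x + h x) = rexpect g + rexpect h.
Proof.
move=> gL hL; rewrite /rexpect (expectationD gL hL) fineD//;
  exact: expectation_fin_num.
Qed.

Lemma rexpectZ (g : T -> R) (k : R) : g \in Lfun P 1 ->
  rexpect (fun x => k * g x) = k * rexpect g.
Proof.
move=> gL; rewrite /rexpect.
have -> : (fun x => k * g x) = k \o* g by apply/funext => x /=; rewrite mulrC.
by rewrite expectationZl// fineM//; exact: expectation_fin_num.
Qed.

Lemma rexpect_cst (r : R) : rexpect (fun _ => r) = r.
Proof. by rewrite /rexpect -[fun _ => r]/(cst r) expectation_cst. Qed.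

Lemma rexpect_indic (A : set T) : measurable A -> rexpect (\1_A) = fine (P A).
Proof. by move=> mA; rewrite /rexpect expectation_indic. Qed.

Lemma ler_rexpect (g h : T -> R) : g \in Lfun P 1 -> h \in Lfun P 1 ->
  (forall x, g x <= h x) -> rexpect g <= rexpect h.
Proof.
move=> gL hL gh; rewrite /rexpect fine_le ?expectation_fin_num// unlock.
apply: le_integral => //; [exact/Lfun1_integrable|exact/Lfun1_integrable|].
by move=> x _; rewrite lee_fin.
Qed.

Lemma rexpect_sum (I : finType) (g : I -> T -> R) :
  (forall i, g i \in Lfun P 1) ->
  rexpect (fun x => \sum_i g i x) = \sum_i rexpect (g i).
Proof.
move=> gL; rewrite -fct_sumE.
pose Q (F : T -> R) (r : R) := F \in Lfun P 1 /\ rexpect F = r.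
suff [] : Q (\sum_i g i) (\sum_i rexpect (g i)) by [].
apply: (big_ind2 Q) => [|F1 r1 F2 r2 [F1L <-] [F2L <-]|i _]; last by split.
  by split; [exact: rpred0|exact: (rexpect_cst 0)].
by split; [exact: rpredD|exact: rexpectD].
Qed.

End real_expectation.

Section bigmax0.
Variable R : realDomainType.

Lemma le_bigmax0 (I : finType) (F : I -> R) i : F i <= \big[Num.max/0]_j F j.
Proof.
elim: (index_enum I) (mem_index_enum i) => // a s IH.
rewrite inE big_cons => /orP[/eqP <-|/IH Fi]; first by rewrite le_max lexx.
by rewrite le_max Fi orbT.
Qed.

Lemma bigmax0_le (I : Type) (s : seq I) (F : I -> R) y :
  0 <= y -> (forall i, F i <= y) -> \big[Num.max/0]_(j <- s) F j <= y.
Proof.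
move=> y0 Fy; elim: s => [|a s IH]; first by rewrite big_nil.
by rewrite big_cons ge_max Fy IH.
Qed.

Lemma bigmax0_ge0 (I : Type) (s : seq I) (F : I -> R) :
  0 <= \big[Num.max/0]_(j <- s) F j.
Proof.
elim: s => [|a s IH]; first by rewrite big_nil.
by rewrite big_cons le_max IH orbT.
Qed.

Lemma bigmax0_le_sum n (x : 'I_n -> R) : (forall i, 0 <= x i) ->
  \big[Num.max/0]_(i < n) x i <= \sum_(i < n) x i.
Proof.
move=> x0; apply: bigmax0_le => [|j]; first exact: sumr_ge0.
by rewrite (bigD1 j)//= lerDl sumr_ge0.
Qed.

Lemma bigmax0_le_1_prod n (x : 'I_n -> R) : (forall i, 0 <= x i <= 1) ->
  \big[Num.max/0]_(i < n) x i <= 1 - \prod_(i < n) (1 - x i).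
Proof.
move=> x01; have y01 i : 0 <= 1 - x i <= 1 by have := x01 i; lra.
apply: bigmax0_le => [|i]; first by rewrite subr_ge0 prodr_ile1.
rewrite (bigD1 i)//=.
have /andP[y0 y1] := y01 i.
have /andP[p0 p1] : 0 <= \prod_(j < n | j != i) (1 - x j) <= 1.
  by rewrite prodr_ge0 ?prodr_ile1// => j _; have /andP[] := y01 j.
have : (1 - x i) * \prod_(j < n | j != i) (1 - x j) <= 1 - x i by rewrite ler_piMr.
lra.
Qed.

End bigmax0.

Lemma measurable_bigmax0 d (T : measurableType d) (R : realType) (I : Type)
  (s : seq I) (F : I -> T -> R) : (forall i, measurable_fun setT (F i)) ->
  measurable_fun setT (fun x => \big[Num.max/0]_(i <- s) F i x).
Proof.
move=> mF; elim: s => [|a s IH].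
  by under eq_fun do rewrite big_nil; exact: measurable_cst.
by under eq_fun do rewrite big_cons; exact: measurable_maxr.
Qed.

Lemma ler_add_invS (R : archiRealFieldType) (x y : R) :
  (forall k : nat, x <= y + k.+1%:R^-1) -> x <= y.
Proof.
move=> H; apply/ler_addgt0Pr => e e0.
apply: le_trans (H (Num.truncn e^-1)) _; rewrite lerD2l.
rewrite -[leRHS]invrK lef_pV2 ?posrE ?invr_gt0 ?ltr0n//.
exact/ltW/truncnS_gt.
Qed.

Lemma tangent_le_expr (R : realFieldType) (s q : R) (m : nat) :
  0 <= s -> 0 <= q -> q ^+ m.+1 + m.+1%:R * q ^+ m * (s - q) <= s ^+ m.+1.
Proof.
move=> s0 q0; rewrite -subr_ge0.
have -> : s ^+ m.+1 - (q ^+ m.+1 + m.+1%:R * q ^+ m * (s - q)) =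
    (s - q) * \sum_(i < m.+1) (s ^+ (m - i) * q ^+ i - q ^+ m).
  rewrite opprD addrA subrXX /= sumrB sumr_const card_ord -mulr_natr; ring.
have qm (i : 'I_m.+1) : q ^+ m = q ^+ (m - i) * q ^+ i.
  by rewrite -exprD subnK// -ltnS.
have [qs|sq] := leP q s.
  rewrite mulr_ge0 ?subr_ge0// sumr_ge0// => i _; rewrite subr_ge0 (qm i).
  by rewrite ler_wpM2r ?exprn_ge0// lerXn2r// nnegrE.
rewrite -mulrNN -sumrN mulr_ge0 ?oppr_ge0 ?subr_le0 ?(ltW sq)//.
rewrite sumr_ge0// => i _; rewrite oppr_ge0 subr_le0 (qm i).
by rewrite ler_wpM2r ?exprn_ge0// lerXn2r// ?nnegrE// ltW.
Qed.

Lemma gap_le_tangent (R : realFieldType) (m : nat) (q u M e : R) :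
  0 <= q <= 1 -> m.+1%:R * q ^+ m = 1 -> 0 <= e ->
  M <= 1 - Num.max 0 (1 - u - e) ^+ m.+1 -> M - u <= q - q ^+ m.+1 + e.
Proof.
move=> /andP[q0 q1] qm e0 hM.
have qmq : q ^+ m.+1 <= q by rewrite exprS ler_piMr ?exprn_ile1.
have [sg0|sg0] := leP 0 (1 - u - e); last first.
  rewrite max_l ?(ltW sg0)// expr0n subr0 in hM; lra.
rewrite max_r// in hM; have := tangent_le_expr m sg0 q0; rewrite qm mul1r; lra.
Qed.

Lemma gap_argmax_facts (R : realType) (m : nat) :
  let q : R := m.+2%:R `^ (- m.+1%:R^-1) in
  [/\ 0 <= q <= 1, m.+2%:R * q ^+ m.+1 = 1 &
      q ^+ m.+2 = m.+2%:R `^ (- (m.+2%:R / m.+1%:R))].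
Proof.
move=> q; have n0 : 0 < m.+2%:R :> R by rewrite ltr0n.
have qX k : q ^+ k = m.+2%:R `^ (- m.+1%:R^-1 * k%:R).
  by rewrite powRrM powR_mulrn// powR_ge0.
have qm : q ^+ m.+1 = m.+2%:R^-1 by rewrite qX mulNr mulVf// powR_inv1// ltW.
split.
- rewrite powR_ge0 /= leNgt; apply/negP => q1.
  have := ler_eXnr (isT : (0 < m.+1)%N) (ltW q1); rewrite qm.
  have : m.+2%:R^-1 < 1 :> R by rewrite invf_lt1// ltr1n.
  by move=> lt1 qle; have := lt_trans (le_lt_trans qle lt1) q1; rewrite ltxx.
- by rewrite qm divff// gt_eqF.
- by rewrite qX mulNr [_ * _]mulrC.
Qed.

Section grid.
Variables (R : realType) (K : nat).

Definition grid (j : nat) : R := j%:R / K%:R.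

Definition grid_cell (j : nat) : set R :=
  [set r | grid j - K%:R^-1 < r <= grid j].

Lemma gridS j : grid j.+1 = grid j + K%:R^-1.
Proof. by rewrite /grid -natr1 mulrDl mul1r. Qed.

Lemma grid_le1 j : (j <= K)%N -> grid j <= 1.
Proof.
move=> jK; rewrite /grid; have [->|K0] := posnP K; first by rewrite invr0 mulr0.
by rewrite ler_pdivrMr ?ltr0n// mul1r ler_nat.
Qed.

Lemma measurable_grid_cell j : measurable (grid_cell j).
Proof.
rewrite [grid_cell j](_ : _ = [set` `](grid j - K%:R^-1), grid j]]).
  exact: measurable_itv.
by apply/seteqP; split => x /=; rewrite in_itv.
Qed.

Lemma mem_grid_cell j r :
  (r \in grid_cell j) = (grid j - K%:R^-1 < r) && (r <= grid j).
Proof. by apply/idP/idP => [/set_mem//|?]; exact/mem_set. Qed.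

Lemma indic_grid_cellE j r :
  (\1_(grid_cell j) r : R) =
  (r <= grid j.+1 - K%:R^-1)%R%:R - (r <= grid j - K%:R^-1)%R%:R.
Proof.
rewrite indicE mem_grid_cell gridS addrK.
have [rl|lr] := leP r (grid j - K%:R^-1); last by rewrite subr0.
by rewrite (le_trans rl) ?subrr// gerBl invr_ge0.
Qed.

Hypothesis K_gt0 : (0 < K)%N.

Lemma sum_indic_grid_cell r : 0 <= r <= 1 ->
  \sum_(j < K.+1) \1_(grid_cell j) r = 1 :> R.
Proof.
move=> /andP[r0 r1]; under eq_bigr do rewrite indic_grid_cellE.
rewrite -(big_mkord xpredT (fun j => (r <= grid j.+1 - K%:R^-1)%R%:R
                                     - (r <= grid j - K%:R^-1)%R%:R)).
rewrite telescope_sumr// gridS addrK /grid divff ?pnatr_eq0 -?lt0n// r1.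
rewrite mul0r sub0r (_ : (r <= - K%:R^-1) = false) ?subr0//.
by apply/negbTE; rewrite -ltNge (lt_le_trans _ r0)// oppr_lt0 invr_gt0 ltr0n.
Qed.

End grid.

Arguments grid {R} K j.
Arguments grid_cell {R} K j.

Section independent_unit_interval.
Context d (T : measurableType d) (R : realType) (P : probability T R) (n : nat)
  (X : 'I_n -> {RV P >-> R}).
Hypothesis X_ind : mutually_independent P (fun i => X i : T -> R).
Hypothesis X01 : forall i x, 0 <= X i x <= 1.

Lemma Lfun1_RV01 i : (X i : T -> R) \in Lfun P 1.
Proof.
apply: (@Lfun1_bounded _ _ _ P _ 1) => // x.
by have /andP[X0 X1] := X01 i x; rewrite ger0_norm.
Qed.

Lemma Lfun1_bigmax_RV01 : (fun x => \big[Num.max/0]_(i < n) X i x) \in Lfun P 1.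
Proof.
apply: (@Lfun1_bounded _ _ _ P _ 1).
  by apply: measurable_bigmax0 => i; exact: measurable_funPT.
move=> x; rewrite ger0_norm ?bigmax0_ge0//.
by apply: bigmax0_le => // i; have /andP[] := X01 i x.
Qed.

Lemma rexpect_le_Umax i : rexpect P (X i) <= Umax P (fun i => X i : T -> R).
Proof.
exact: (le_bigmax0 (fun i => rexpect P (X i))).
Qed.

Lemma Mmax_le_Umax :
  Mmax P (fun i => X i : T -> R) <= n%:R * Umax P (fun i => X i : T -> R).
Proof.
apply: le_trans (_ : rexpect P (fun x => \sum_i X i x) <= _).
  apply: ler_rexpect; [exact: Lfun1_bigmax_RV01|exact: Lfun1_sum Lfun1_RV01|].
  by move=> x; apply: bigmax0_le_sum => i; have /andP[] := X01 i x.
rewrite rexpect_sum; last exact: Lfun1_RV01.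
rewrite mulr_natl -[X in _ *+ X](card_ord n) -sumr_const.
by apply: ler_sum => i _; exact: rexpect_le_Umax.
Qed.

Section grid_approximation.
Variable K : nat.
Hypothesis K_gt0 : (0 < K)%N.

Let Xcell i j := (X i : T -> R) @^-1` grid_cell K j.

Let p i j := fine (P (Xcell i j)).

(* Stated in the shape used by [mutually_independent], with [J = setT]. *)
Let box (f : {ffun 'I_n -> 'I_K.+1}) :=
  [set x | forall i, i \in [set: 'I_n]%SET -> grid_cell K (f i) (X i x)].

Let measurable_Xcell i j : measurable (Xcell i j).
Proof. exact: (measurable_funPTI (X i) (measurable_grid_cell _ _)). Qed.

Let indic_box f x : \1_(box f) x = \prod_i \1_(Xcell i (f i)) x :> R.
Proof.
rewrite indicE; have [/set_mem inbox|notinbox] := boolP (x \in box f).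
  rewrite big1// => i _; rewrite indicE mem_set//.
  by apply: inbox; rewrite finset.in_setT.
have [i Xi] : exists i, ~ Xcell i (f i) x.
  apply: contrapT => allcell; apply/(negP notinbox)/mem_set => i _.
  by apply: contrapT => notcell; apply: allcell; exists i.
by rewrite (bigD1 i)//= indicE memNset// mul0r.
Qed.

Let measurable_box f : measurable (box f).
Proof.
rewrite [box f](_ : _ = \bigcap_(i in [set: 'I_n]) Xcell i (f i)).
  by apply: fin_bigcap_measurable => // i _; exact: measurable_Xcell.
by apply/seteqP; split => x /= boxx i _; apply: boxx; rewrite ?finset.in_setT.
Qed.

Let prob_box f : fine (P (box f)) = \prod_i p i (f i).
Proof.
rewrite (X_ind [set: 'I_n]%SET (fun i => measurable_grid_cell K (f i))).
rewrite (eq_bigr (fun i => (p i (f i))%:E)) => [|i _]; last first.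
  by rewrite fineK// fin_num_measure.
by rewrite prodEFin /= big_mkcond; apply: eq_bigr => i _; rewrite finset.in_setT.
Qed.

Let sum_indic_Xcell i x : \sum_(j < K.+1) (\1_(Xcell i j) x : R) = 1.
Proof. exact: (sum_indic_grid_cell _ (X01 i x)). Qed.

Let sum_p i : \sum_(j < K.+1) p i j = 1.
Proof.
rewrite -(rexpect_cst P 1) -(funext (sum_indic_Xcell i)).
rewrite rexpect_sum => [|j]; last exact: Lfun1_indic.
by apply: eq_bigr => j _; rewrite rexpect_indic.
Qed.

(* [1 - grid K j] is [1 - X i] rounded down on the cell [Xcell i j]. *)
Let s i := \sum_(j < K.+1) (1 - grid K j) * p i j.

Let grid_compl_ge0 (j : 'I_K.+1) : 0 <= 1 - grid K j :> R.
Proof. by rewrite subr_ge0 grid_le1// -ltnS. Qed.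

Let bigmax_le_box_sum x :
  \big[Num.max/0]_(i < n) X i x <=
  \sum_(f : {ffun 'I_n -> 'I_K.+1}) (1 - \prod_i (1 - grid K (f i))) * \1_(box f) x.
Proof.
apply: le_trans (bigmax0_le_1_prod (X01^~ x)) _; set Q := 1 - _.
have -> : Q = Q * \prod_(i < n) \sum_(j < K.+1) (\1_(Xcell i j) x : R).
  by rewrite big1 ?mulr1// => i _; exact: sum_indic_Xcell.
rewrite bigA_distr_bigA mulr_sumr; apply: ler_sum => f _.
rewrite -indic_box indicE.
have [/set_mem inbox|_] := boolP (x \in box f); last by rewrite !mulr0.
rewrite !mulr1 lerD2l lerN2; apply: ler_prod => i _.
rewrite grid_compl_ge0 lerD2l lerN2 /=.
by have /andP[] := inbox i (finset.in_setT i).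
Qed.

Let rexpect_box_sum :
  rexpect P (fun x => \sum_(f : {ffun 'I_n -> 'I_K.+1})
                        (1 - \prod_i (1 - grid K (f i))) * \1_(box f) x) =
  1 - \prod_i s i.
Proof.
rewrite rexpect_sum => [|f]; last exact/Lfun1_scale/Lfun1_indic.
rewrite (eq_bigr (fun f : {ffun 'I_n -> 'I_K.+1} =>
    (1 - \prod_i (1 - grid K (f i))) * \prod_i p i (f i)));
  last by move=> f _; rewrite rexpectZ ?rexpect_indic ?prob_box//; exact: Lfun1_indic.
under eq_bigr do rewrite mulrBl mul1r -big_split.
rewrite sumrB -(bigA_distr_bigA (fun i (j : 'I_K.+1) => p i j)).
rewrite -(bigA_distr_bigA (fun i (j : 'I_K.+1) => (1 - grid K j) * p i j)).
by rewrite big1// => i _; exact: sum_p.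
Qed.

Let s_ge0 i : 0 <= s i.
Proof. by rewrite sumr_ge0// => j _; rewrite mulr_ge0// fine_ge0. Qed.

Let rexpect_le_s i : 1 - rexpect P (X i) - K%:R^-1 <= s i.
Proof.
have -> : s i =
    rexpect P (fun x => \sum_(j < K.+1) (1 - grid K j) * \1_(Xcell i j) x).
  rewrite rexpect_sum => [|j]; last exact/Lfun1_scale/Lfun1_indic.
  by apply: eq_bigr => j _; rewrite rexpectZ ?rexpect_indic//; exact: Lfun1_indic.
have -> : 1 - rexpect P (X i) - K%:R^-1 =
          rexpect P (fun x => (1 - K%:R^-1) + (-1) * X i x).
  rewrite rexpectD; [|exact: Lfun_cst|exact/Lfun1_scale/Lfun1_RV01].
  rewrite rexpect_cst rexpectZ; [lra|exact: Lfun1_RV01].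
apply: ler_rexpect => [||x].
- by apply: Lfun1_add; [exact: Lfun_cst|exact/Lfun1_scale/Lfun1_RV01].
- by apply: Lfun1_sum => j; exact/Lfun1_scale/Lfun1_indic.
set L := (X in X <= _).
have -> : L = L * \sum_(j < K.+1) \1_(Xcell i j) x by rewrite sum_indic_Xcell mulr1.
rewrite mulr_sumr; apply: ler_sum => j _; rewrite indicE.
have [/set_mem /andP[lo _]|_] := boolP (x \in Xcell i j).
  by rewrite !mulr1 /L; lra.
by rewrite !mulr0.
Qed.

Lemma Mmax_le_grid : Mmax P (fun i => X i : T -> R) <=
  1 - \prod_i Num.max 0 (1 - rexpect P (X i) - K%:R^-1).
Proof.
apply: le_trans (ler_rexpect Lfun1_bigmax_RV01 _ bigmax_le_box_sum) _.
  by apply: Lfun1_sum => f; exact/Lfun1_scale/Lfun1_indic.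
rewrite rexpect_box_sum lerD2l lerN2; apply: ler_prod => i _.
by rewrite le_max lexx ge_max s_ge0 rexpect_le_s.
Qed.

End grid_approximation.

Lemma Mmax_le_Umax_grid K : (0 < K)%N -> Mmax P (fun i => X i : T -> R) <=
  1 - Num.max 0 (1 - Umax P (fun i => X i : T -> R) - K%:R^-1) ^+ n.
Proof.
move=> K_gt0; apply: le_trans (Mmax_le_grid K_gt0) _.
rewrite lerD2l lerN2 -[X in _ ^+ X](card_ord n) -prodr_const.
apply: ler_prod => i _; rewrite le_max lexx /= ge_max !le_max lexx /=.
by rewrite lerD2r lerD2l lerN2 rexpect_le_Umax orbT.
Qed.

End independent_unit_interval.

Section bernoulli.
Context d (T : measurableType d) (R : realType) (P : probability T R) (n : nat)
  (Z : 'I_n -> {RV P >-> R}) (p : R).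
Hypothesis Z_ind : mutually_independent P (fun i => Z i : T -> R).
Hypothesis Z01 : forall i x, Z i x = 0 \/ Z i x = 1.
Hypothesis PZ1 : forall i, P (Z i @^-1` [set 1]) = p%:E.

Let rexpect_bernoulli i : rexpect P (Z i) = p.
Proof.
rewrite (_ : Z i = \1_(Z i @^-1` [set 1]) :> (T -> R)).
  by rewrite rexpect_indic ?PZ1//; exact: measurable_funPTI.
apply/funext => x; rewrite indicE.
case: (Z01 i x) => Zx; last by rewrite Zx mem_set.
by rewrite Zx memNset//= Zx => /esym/eqP; rewrite oner_eq0.
Qed.

Lemma Umax_bernoulli : (0 < n)%N -> Umax P (fun i => Z i : T -> R) = p.
Proof.
move=> n_gt0; pose i0 := Ordinal n_gt0.
have p_ge0 : 0 <= p by rewrite -lee_fin -(PZ1 i0) measure_ge0.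
apply/eqP; rewrite eq_le; apply/andP; split.
  by apply: bigmax0_le => // i; rewrite -[X in _ <= X](rexpect_bernoulli i).
rewrite -(rexpect_bernoulli i0).
exact: (le_bigmax0 (fun i => rexpect P (Z i))).
Qed.

Let prob_Z0 i : P (Z i @^-1` [set 0]) = (1 - p)%:E.
Proof.
rewrite (_ : Z i @^-1` _ = ~` (Z i @^-1` [set 1])).
  by rewrite probability_setC ?PZ1//; exact: measurable_funPTI.
apply/seteqP; split => x /=; first by move=> -> /esym/eqP; rewrite oner_eq0.
by case: (Z01 i x).
Qed.

Let all_zero := [set x | forall i, i \in [set: 'I_n]%SET -> [set 0] (Z i x)].

Let prob_all_zero : P all_zero = ((1 - p) ^+ n)%:E.
Proof.
rewrite (Z_ind [set: 'I_n]%SET (fun i => measurable_set1 0)).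
rewrite (eq_bigr (fun=> (1 - p)%:E)) => [|i _]; last exact: prob_Z0.
by rewrite prodEFin prodr_const cardsT card_ord.
Qed.

Let bigmax_bernoulli x :
  \big[Num.max/0]_(i < n) Z i x = 1 + (-1) * \1_all_zero x.
Proof.
rewrite indicE; have [/set_mem zero|nonzero] := boolP (x \in all_zero).
  rewrite mulr1 subrr; apply/eqP; rewrite eq_le bigmax0_ge0 andbT.
  by apply: bigmax0_le => // i; rewrite (zero i (finset.in_setT i)).
have [i Zi1] : exists i, Z i x = 1.
  apply: contrapT => none1; apply/(negP nonzero)/mem_set => i _.
  by case: (Z01 i x) => // Zi1; exfalso; apply: none1; exists i.
rewrite mulr0 addr0; apply/eqP; rewrite eq_le; apply/andP; split.
  by apply: bigmax0_le => // j; case: (Z01 j x) => ->.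
rewrite -Zi1.
exact: (le_bigmax0 (fun i => Z i x)).
Qed.

Lemma Mmax_bernoulli : Mmax P (fun i => Z i : T -> R) = 1 - (1 - p) ^+ n.
Proof.
have measurable_all_zero : measurable all_zero.
  rewrite [all_zero](_ : _ = \bigcap_(i in [set: 'I_n]) Z i @^-1` [set 0]).
    by apply: fin_bigcap_measurable => // i _; exact: measurable_funPTI.
  by apply/seteqP; split => x /= zero i _; apply: zero; rewrite ?finset.in_setT.
rewrite -[Mmax _ _]/(rexpect P _) (funext bigmax_bernoulli).
rewrite rexpectD ?rexpect_cst ?rexpectZ ?rexpect_indic ?prob_all_zero ?mulN1r//.
- exact: Lfun1_indic.
- exact: Lfun_cst.
- exact/Lfun1_scale/Lfun1_indic.
Qed.

End bernoulli.

Theorem mainTheorem3 (R : realType) (n : nat) (hn : (2 <= n)%N) :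
  (forall (d : measure_display) (T : measurableType d) (P : probability T R)
          (X : 'I_n -> {RV P >-> R}),
      mutually_independent P (fun i => (X i : T -> R)) ->
      (forall i x, 0 <= X i x <= 1) ->
      (0 < Umax P (fun i => (X i : T -> R)) ->
         Mmax P (fun i => (X i : T -> R)) / Umax P (fun i => (X i : T -> R))
           <= n%:R) /\
      Mmax P (fun i => (X i : T -> R)) - Umax P (fun i => (X i : T -> R))
        <= n%:R `^ (- (n.-1)%:R^-1) - n%:R `^ (- (n%:R / (n.-1)%:R)))
  /\
  (forall (d : measure_display) (T : measurableType d) (P : probability T R)
          (Z : 'I_n -> {RV P >-> R}),
      mutually_independent P (fun i => (Z i : T -> R)) ->
      (forall i x, Z i x = 0 \/ Z i x = 1) ->
      (forall i, P (Z i @^-1` [set 1]) = (1 - n%:R `^ (- (n.-1)%:R^-1))%:E) ->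
      Umax P (fun i => (Z i : T -> R)) = 1 - n%:R `^ (- (n.-1)%:R^-1) /\
      Mmax P (fun i => (Z i : T -> R)) - Umax P (fun i => (Z i : T -> R))
        = n%:R `^ (- (n.-1)%:R^-1) - n%:R `^ (- (n%:R / (n.-1)%:R))).
Proof.
case: n hn => [|[|m]] // _ /=; have [q01 qm qn] := gap_argmax_facts R m.
set q := m.+2%:R `^ _ in q01 qm qn *; rewrite -qn.
split=> [d T P X X_ind X01 | d T P Z Z_ind Z01 PZ1].
  split=> [U_gt0|].
    by rewrite ler_pdivrMr// (le_trans (Mmax_le_Umax X01))// mulrC.
  apply: ler_add_invS => k; apply: gap_le_tangent q01 qm _ _ => //.
  exact: Mmax_le_Umax_grid.
rewrite (Umax_bernoulli Z01 PZ1)// (Mmax_bernoulli Z_ind Z01 PZ1).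
by split=> //; rewrite subKr; lra.
Qed.
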